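(* Let $F$ be an unsatisfiable CNF formula over variables $X \cup Y \cup Z$ (pairwise disjoint), $X=\{x_1,\ldots,x_n\}$, such that for every truth assignment to $X \cup Y$ the values of the variables in $Z$ are obtained from it by unit propagation in $F$. Let $c_X(F) = \{\gamma \vee \neg a \vee \neg b \mid \gamma \in F\} \cup \{\neg x_i \vee v_i \mid 1\le i\le n\} \cup \{x_i \vee v_i \mid 1\le i\le n\} \cup \{\neg v_1 \vee \cdots \vee \neg v_n \vee a\} \cup \{\neg v_1 \vee \cdots \vee \neg v_n \vee b\}$, where $a,b,v_1,\ldots,v_n$ are new variables. Then, with branching restricted to the variables in $X \cup Y$, there exists a minimum-size DPLL-Mono search tree of $c_X(F)$ consisting of a complete tree over $X$ (every path from the root to an empty subtree contains exactly one node labelled by each variable of $X$) in which every empty subtree is replaced by a tree whose nodes are labelled by variables of $Y$.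
   Context: A CNF formula is a finite set of clauses; the empty clause is unsatisfiable. For a partial assignment $I$ (set of literals), $F|I$ is obtained by deleting clauses containing a literal true under $I$ and deleting false literals from remaining clauses. $Var(F)$ is the set of variables of $F$. A binary tree is empty $()$ or a triple $(x~T_1~T_2)$; its size is its number of nodes. $U(F)$ denotes the result of exhaustively applying unit propagation to $F$ (a unit clause $l$ forces the restriction by $\{l\}$). For a set $B$ of variables, a DPLL-Mono search tree (DMST) of $F$ with branching restricted to $B$ is: $()$ if $U(F)$ contains the empty clause; otherwise $(x~T_1~T_2)$ with $x \in B \cap Var(U(F))$, $T_1$ a DMST of $U(F|\{\neg x\})$ and $T_2$ a DMST of $U(F|\{x\})$, both with branching restricted to $B$. *)

From mathcomp Require Import all_boot.
Set Implicit Arguments. Unset Strict Implicit. Unset Printing Implicit Defensive.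

(* Variables are natural numbers; a literal is (variable, polarity),
   polarity true = positive literal x, false = negative literal ~x. *)
Definition lit := (nat * bool)%type.
Definition clause := seq lit.
Definition cnf := seq clause.

Definition neg (l : lit) : lit := (l.1, ~~ l.2).

Definition restrict (F : cnf) (I : seq lit) : cnf :=
  [seq [seq l <- C | neg l \notin I] | C <- F & ~~ has (fun l => l \in I) C].

Definition vars (F : cnf) : seq nat := flatten [seq [seq l.1 | l <- C] | C <- F].

Definition is_unit (C : clause) : bool := size (undup C) == 1.

(* Exhaustive unit propagation: repeatedly pick the first unit clause {l}
   and restrict by {l}; each step removes at least the unit clause, so
   size F steps suffice. *)
Fixpoint up_fuel (n : nat) (F : cnf) : cnf :=
  match n with
  | 0 => F
  | n'.+1 =>
      match [seq C <- F | is_unit C] with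
      | [::] => F
      | C :: _ => up_fuel n' (restrict F [:: head (0, true) C])
      end
  end.



Definition UP (F : cnf) : cnf := up_fuel (size F) F.

Inductive tree : Type := Leaf | Node of nat & tree & tree.

Fixpoint tree_size (T : tree) : nat :=
  match T with Leaf => 0 | Node _ T1 T2 => (tree_size T1 + tree_size T2).+1 end.

Inductive dmst (B : seq nat) : cnf -> tree -> Prop :=
| dmst_leaf F : [::] \in UP F -> dmst B F Leaf
| dmst_node F x T1 T2 :
    [::] \notin UP F -> x \in B -> x \in vars (UP F) ->
    dmst B (UP (restrict F [:: (x, false)])) T1 ->
    dmst B (UP (restrict F [:: (x, true)])) T2 ->
    dmst B F (Node x T1 T2).

Inductive up_derived (F : cnf) (I : seq lit) : lit -> Prop :=
| upd_init l : l \in I -> up_derived F I l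
| upd_step (C : clause) l : C \in F -> l \in C ->
    (forall l', l' \in C -> l' != l -> up_derived F I (neg l')) ->
    up_derived F I l.

Definition satisfies (alpha : nat -> bool) (F : cnf) : bool :=
  all (fun C => has (fun l => alpha l.1 == l.2) C) F.

Definition unsat (F : cnf) : Prop := forall alpha, ~~ satisfies alpha F.

Definition cX (F : cnf) (X : seq nat) (a b : nat) (vs : seq nat) : cnf :=
  [seq C ++ [:: (a, false); (b, false)] | C <- F]
  ++ [seq [:: (p.1, false); (p.2, true)] | p <- zip X vs]
  ++ [seq [:: (p.1, true); (p.2, true)] | p <- zip X vs]
  ++ [:: rcons [seq (v, false) | v <- vs] (a, true);
         rcons [seq (v, false) | v <- vs] (b, true)].

Fixpoint labels_in (Y : seq nat) (T : tree) : bool :=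
  match T with
  | Leaf => true
  | Node x T1 T2 => (x \in Y) && labels_in Y T1 && labels_in Y T2
  end.

Fixpoint xy_shape (S Y : seq nat) (T : tree) : bool :=
  match S with
  | [::] => labels_in Y T
  | _ :: _ =>
      match T with
      | Leaf => false
      | Node x T1 T2 => (x \in S) && xy_shape (rem x S) Y T1 && xy_shape (rem x S) Y T2
      end
  end.

From mathcomp Require Import all_boot zify.
From Stdlib Require Import Classical ClassicalEpsilon Wf_nat.
Set Implicit Arguments. Unset Strict Implicit. Unset Printing Implicit Defensive.

(* As long as some x_i is undecided, unit propagation in c_X(F) only fires
   the clauses x_i \/ v_i and ~x_i \/ v_i of decided x_i; the state stays
   consistent and every undecided x_i occurs in the residual formula.  Hence
   in a search tree any undecided x_i can be moved to the root of a subtree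
   of the required shape, and a node on y \in Y above X-nodes can be pushed
   below them: reroot its second subtree at the root variable of its first
   one and merge the two recursively; below the X-part the y-node is kept,
   or replaced by one of its subtrees when y is already propagated or no
   longer occurs.  Neither step increases the size, so normalizing a tree
   of minimum size gives one of the required shape.  Search trees exist
   because a consistent state in which all of X is decided and no variable
   of X \cup Y occurs is impossible: a and b are then propagated, Z is
   propagated from X \cup Y, and the propagated values would satisfy F. *)

Lemma negK : involutive neg.
Proof. by case=> x []. Qed.

Lemma neg_neq l : (neg l == l) = false.
Proof. by case: l => x []; rewrite /neg /= xpair_eqE eqxx. Qed.

Lemma lit_of_var l m : m.1 = l.1 -> m = l \/ m = neg l.
Proof. by case: l m => x [] [y []] /= ->; rewrite /neg /=; auto. Qed.

Lemma mem_rcons_swap (T : eqType) (s : seq T) x y :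
  rcons (rcons s x) y =i rcons (rcons s y) x.
Proof. by move=> z; rewrite !(mem_rcons, inE) orbCA. Qed.

Lemma mem_rcons_r (T : eqType) (s : seq T) x : {subset s <= rcons s x}.
Proof. by move=> y; rewrite mem_rcons inE orbC => ->. Qed.

Lemma ex_min_size (P : tree -> Prop) : (exists T, P T) ->
  exists2 T, P T & forall T', P T' -> tree_size T <= tree_size T'.
Proof.
case=> T0 PT0; pose sizes n := exists T, P T /\ tree_size T = n.
have [n [[[T [PT <-]] Tmin] _]] := dec_inh_nat_subset_has_unique_least_element
  sizes (fun n => classic (sizes n)) (ex_intro sizes _ (ex_intro _ T0 (conj PT0 erefl))).
by exists T => // T' PT'; apply/leP/Tmin; exists T'.
Qed.

(** * Unit propagation as a closure *)

Section Propagation.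
Variable G : cnf.
Notation derived := (up_derived G).

Lemma up_derived_sub S S' : {subset S <= S'} -> forall l, derived S l -> derived S' l.
Proof.
move=> sub l; elim=> [m Hm | C m HC Hm _ IH]; first by apply: upd_init; apply: sub.
exact: (upd_step HC Hm IH).
Qed.

Lemma up_derived_trans S S' :
  (forall l, l \in S' -> derived S l) -> forall l, derived S' l -> derived S l.
Proof. by move=> sub l; elim=> [m /sub //| C m HC Hm _ IH]; apply: (upd_step HC Hm IH). Qed.

Definition up_equiv S S' := forall l, derived S l <-> derived S' l.

Lemma up_equiv_mem S S' : S =i S' -> up_equiv S S'.
Proof. by move=> E l; split; apply: up_derived_sub => k; rewrite E. Qed.

Lemma up_equiv_rcons_derived S l : derived S l -> up_equiv (rcons S l) S.
Proof.
move=> Dl m; split; last exact/up_derived_sub/mem_rcons_r.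
by apply: up_derived_trans => k; rewrite mem_rcons inE => /orP [/eqP->|/upd_init].
Qed.

Lemma up_equiv_rcons S S' l : up_equiv S S' -> up_equiv (rcons S l) (rcons S' l).
Proof.
suff sub T T' : up_equiv T T' -> forall m, derived (rcons T l) m -> derived (rcons T' l) m.
  by move=> E m; split; apply: sub => // k; rewrite E.
move=> E; apply: up_derived_trans => k; rewrite mem_rcons inE => /orP [/eqP->|Hk].
  by apply: upd_init; rewrite mem_rcons mem_head.
exact/(up_derived_sub (@mem_rcons_r _ T' l))/E/upd_init.
Qed.

Definition up_consistent S := forall l, derived S l -> derived S (neg l) -> False.

Definition unsatisfied S (C : clause) := forall m, m \in C -> ~ derived S m.

(* x \in Var(U(G|S)), read off the propagation closure of S. *)
Definition active S x := exists2 C, C \in G &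
  unsatisfied S C /\ exists2 m, m \in C & m.1 = x /\ ~ derived S (neg m).

Lemma up_consistent_equiv S S' : up_equiv S S' -> up_consistent S -> up_consistent S'.
Proof. by move=> E c l /E H1 /E H2; exact: c H1 H2. Qed.

Lemma up_consistent_sub S S' : {subset S <= S'} -> up_consistent S' -> up_consistent S.
Proof. by move=> sub c l /(up_derived_sub sub) H1 /(up_derived_sub sub) H2; exact: c H1 H2. Qed.

Lemma active_equiv S S' x : up_equiv S S' -> active S x -> active S' x.
Proof.
move=> E [C HC [unC [m Hm [mx nm]]]]; exists C => //; split; first by move=> k /unC H /E.
by exists m => //; split => // /E.
Qed.

Lemma active_sub S S' x : {subset S <= S'} -> active S' x -> active S x.
Proof.
move=> sub [C HC [unC [m Hm [mx nm]]]]; exists C => //; split.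
  by move=> k /unC H /(up_derived_sub sub).
by exists m => //; split => // /(up_derived_sub sub).
Qed.

Lemma active_underived S x c : active S x -> ~ derived S (x, c).
Proof.
move=> [C HC [unC [m Hm [<- nm]]]].
by have /lit_of_var [->|->] : (m.1, c).1 = m.1 by []; first exact: unC.
Qed.

Lemma active_notin S x c : active S x -> (x, c) \notin S.
Proof. by move=> act; apply/negP => /(upd_init G); apply: active_underived act. Qed.

Variable B : seq nat.

(* [dm_tree S T]: T is a DMST of U(G|S), with the formula described through
   the propagation closure of the decisions S rather than syntactically. *)
Inductive dm_tree : seq lit -> tree -> Prop :=
| dm_tree_leaf S : ~ up_consistent S -> dm_tree S Leaf
| dm_tree_node S x T1 T2 : up_consistent S -> x \in B -> active S x ->
    dm_tree (rcons S (x, false)) T1 -> dm_tree (rcons S (x, true)) T2 ->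
    dm_tree S (Node x T1 T2).

Lemma dm_tree_equiv T S S' : up_equiv S S' -> dm_tree S T -> dm_tree S' T.
Proof.
move=> E H; elim: H S' E => {S T} [S nc | S x T1 T2 c xB act _ IH1 _ IH2] S' E.
  by apply: dm_tree_leaf => c; apply/nc/(up_consistent_equiv _ c) => k; rewrite E.
apply: dm_tree_node; first exact: up_consistent_equiv c.
- exact: xB.
- exact: active_equiv act.
- exact/IH1/up_equiv_rcons.
exact/IH2/up_equiv_rcons.
Qed.

Lemma dm_tree_mem T S S' : S =i S' -> dm_tree S T -> dm_tree S' T.
Proof. by move/up_equiv_mem; apply: dm_tree_equiv. Qed.

Lemma dm_tree_leafP S : dm_tree S Leaf -> ~ up_consistent S.
Proof. by move=> H; inversion H. Qed.

Lemma dm_tree_nodeP S x T1 T2 : dm_tree S (Node x T1 T2) ->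
  [/\ up_consistent S, x \in B, active S x,
      dm_tree (rcons S (x, false)) T1 & dm_tree (rcons S (x, true)) T2].
Proof. by move=> H; inversion H. Qed.

Section DropInactive.
Variables (S : seq lit) (l : lit).
Hypotheses (nDl : ~ derived S l) (nDnl : ~ derived S (neg l)).
Hypothesis inact : ~ active S l.1.

Let l_out C m : C \in G -> unsatisfied S C -> m \in C -> m.1 <> l.1.
Proof.
move=> HC unC mC ml; apply: inact; exists C => //; split => //; exists m => //.
by split => //; case: (lit_of_var ml) => ->; rewrite ?negK.
Qed.

Section Extension.
Variable S' : seq lit.
Hypotheses (subS : {subset S <= S'}) (consS' : up_consistent S').
Hypothesis offl : forall m, m \in S' -> m \in S \/ m.1 <> l.1.

Let underived_var m : derived S' m -> m.1 = l.1 -> False.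
Proof.
move=> Dm Em; have nDm : ~ derived S m by case: (lit_of_var Em) => ->.
case: Dm nDm Em => [m0 Hm0 | C m0 HC Hm0 Hoth] nDm Em.
  by case: (offl Hm0) => // /upd_init.
case: (classic (exists2 j, j \in C & derived S j)) => [[j jC Dj]|unC].
  case: (eqVneq j m0) => [E|jm]; first by rewrite E in Dj.
  by apply: (consS' (l := j)); [apply: up_derived_sub Dj|apply: Hoth].
by apply: (l_out HC _ Hm0 Em) => j jC Dj; apply: unC; exists j.
Qed.

Let derived_rcons m : derived (rcons S' l) m -> derived S' m \/ m = l.
Proof.
elim=> [k | C k HC Hk _ IH]; first by rewrite mem_rcons inE => /orP [/eqP->|/upd_init]; auto.
case: (classic (forall k', k' \in C -> k' != k -> derived S' (neg k'))) => [H|].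
  by left; apply: (upd_step HC Hk H).
move=> /not_all_ex_not [k' H0].
have [k'C /(imply_to_and (k' != k)) [k'k nD]] := imply_to_and _ _ H0.
case: (IH k' k'C k'k) => [//|Ek'].
have k'l : k'.1 = l.1 by rewrite -Ek'.
case: (classic (exists2 j, j \in C & derived S j)) => [[j jC Dj]|unC]; last first.
  by exfalso; apply: (l_out HC _ k'C k'l) => j jC Dj; apply: unC; exists j.
case: (eqVneq j k) => [<-|jk]; first by left; apply: up_derived_sub Dj.
case: (IH j jC jk) => [Dn|En]; first by case: (consS' (up_derived_sub subS Dj) Dn).
by case: nDnl; rewrite -En negK.
Qed.

Lemma up_consistent_rcons_inactive : up_consistent (rcons S' l).
Proof.
move=> m /derived_rcons [D1|->] /derived_rcons [D2|E2].
- exact: consS' D1 D2.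
- by apply: (underived_var D1); rewrite -[m]negK E2.
- exact: (underived_var D2).
- by move: (neg_neq l); rewrite E2 eqxx.
Qed.

End Extension.

Lemma dm_tree_rcons_inactive_gen T S' : {subset S <= S'} ->
  (forall m, m \in S' -> m \in S \/ m.1 <> l.1) ->
  dm_tree (rcons S' l) T -> dm_tree S' T.
Proof.
elim: T S' => [|x T1 IH1 T2 IH2] S' sub offl.
  move/dm_tree_leafP=> nc; apply: dm_tree_leaf => c.
  exact/nc/up_consistent_rcons_inactive.
case/dm_tree_nodeP=> c xB act H1 H2.
have xl : x <> l.1.
  move=> E; apply: (active_underived (c := l.2) act); apply: upd_init.
  by rewrite E -surjective_pairing mem_rcons mem_head.
have sub' c0 : {subset S <= rcons S' (x, c0)} by move=> k /sub /mem_rcons_r.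
have offl' c0 m : m \in rcons S' (x, c0) -> m \in S \/ m.1 <> l.1.
  by rewrite mem_rcons inE => /orP [/eqP->|/offl] //; right.
apply: dm_tree_node.
- exact: up_consistent_sub (@mem_rcons_r _ S' l) c.
- exact: xB.
- exact: active_sub (@mem_rcons_r _ S' l) act.
- by apply: IH1 (sub' _) (offl' _) _; apply: dm_tree_mem H1; apply: mem_rcons_swap.
by apply: IH2 (sub' _) (offl' _) _; apply: dm_tree_mem H2; apply: mem_rcons_swap.
Qed.

Lemma dm_tree_rcons_inactive T : dm_tree (rcons S l) T -> dm_tree S T.
Proof. by apply: dm_tree_rcons_inactive_gen => // m ->; left. Qed.

End DropInactive.

Lemma dm_tree_rcons_derived S l T : derived S l -> dm_tree (rcons S l) T -> dm_tree S T.
Proof. by move=> Dl; apply: dm_tree_equiv (up_equiv_rcons_derived Dl). Qed.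

Lemma dm_tree_merge S y A B0 : y \in B ->
  dm_tree (rcons S (y, false)) A -> dm_tree (rcons S (y, true)) B0 ->
  [\/ dm_tree S Leaf, dm_tree S A, dm_tree S B0 | dm_tree S (Node y A B0)].
Proof.
move=> yB DA DB; case: (classic (up_consistent S)) => c; last by constructor 1; apply: dm_tree_leaf.
case: (classic (derived S (y, true))) => [Dy|nDy].
  by constructor 3; apply: dm_tree_rcons_derived Dy DB.
case: (classic (derived S (y, false))) => [Dy|nDny].
  by constructor 2; apply: dm_tree_rcons_derived Dy DA.
case: (classic (active S y)) => act; first by constructor 4; apply: dm_tree_node.
by constructor 2; exact: (dm_tree_rcons_inactive (l := (y, false)) nDny nDy act DA).
Qed.

End Propagation.

(** * Syntactic unit propagation *)

Lemma restrict_nil (H : cnf) : restrict H [::] = H.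
Proof.
rewrite /restrict; elim: H => //= C H IH.
rewrite has_pred0 /= IH; congr (_ :: _); exact: filter_predT.
Qed.

Lemma mem_restrict (H : cnf) (I : seq lit) C' :
  reflect (exists2 C, C \in H & ~~ has (fun l => l \in I) C /\ C' = [seq l <- C | neg l \notin I])
          (C' \in restrict H I).
Proof.
apply: (iffP mapP) => [[C] | [C HC [nI ->]]]; last by exists C; rewrite // mem_filter nI.
by rewrite mem_filter => /andP [nI HC] ->; exists C.
Qed.

Lemma restrict_rcons (H : cnf) (S : seq lit) l : neg l \notin S ->
  restrict (restrict H S) [:: l] = restrict H (rcons S l).
Proof.
move=> nl; rewrite /restrict; elim: H => //= C H IH.
case hS: (has (fun m => m \in S) C) => /=.
  by rewrite (sub_has (@mem_rcons_r _ S l) hS) /= IH.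
have -> : has (fun m => m \in [:: l]) [seq m <- C | neg m \notin S]
          = has (fun m => m \in rcons S l) C.
  apply/hasP/hasP => [[k] | [k kC]].
    by rewrite mem_filter inE => /andP [_ kC] /eqP Ek; exists k; rewrite // Ek mem_rcons mem_head.
  rewrite mem_rcons inE => /orP [/eqP Ek|kS].
    by exists k; rewrite ?mem_filter ?kC ?Ek ?nl ?mem_head.
  by move/hasPn: (negbT hS) => /(_ k kC); rewrite kS.
case: ifP => _ //=; rewrite IH; congr (_ :: _).
by rewrite -filter_predI; apply: eq_filter => k /=; rewrite mem_rcons !inE negb_or andbC.
Qed.

Lemma size_restrict_lt (H : cnf) l C : C \in H -> l \in C -> size (restrict H [:: l]) < size H.
Proof.
move=> HC lC; rewrite /restrict size_map size_filter.
rewrite -(count_predC (fun C0 => ~~ has (fun m => m \in [:: l]) C0) H) -addn1 leq_add2l.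
rewrite -has_count; apply/hasP; exists C; rewrite //= negbK.
by apply/hasP; exists l; rewrite ?mem_head.
Qed.

Lemma mem_vars (H : cnf) x :
  reflect (exists2 C, C \in H & exists2 l, l \in C & l.1 = x) (x \in vars H).
Proof.
apply: (iffP flattenP) => [[s /mapP [C HC ->] /mapP [l lC ->]] | [C HC [l lC <-]]].
  by exists C => //; exists l.
by exists [seq m.1 | m <- C]; apply: map_f.
Qed.

Lemma is_unitP (C : clause) : is_unit C -> forall l, l \in C -> l = head (0, true) C.
Proof.
rewrite /is_unit; case E: (undup C) => [|h [|h' t]] // _.
have hd l : l \in C -> l = h by rewrite -mem_undup E inE => /eqP.
by case: C E hd => [|c C] //= _ hd l /hd ->; symmetry; apply/hd/mem_head.
Qed.

Lemma is_unit_intro (C : clause) m : m \in C -> (forall l, l \in C -> l = m) -> is_unit C.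
Proof.
move=> mC Cm; have sub : {subset undup C <= [:: m]}.
  by move=> l; rewrite mem_undup => /Cm ->; exact: mem_head.
have /= := uniq_leq_size (undup_uniq C) sub.
have : 0 < size (undup C) by case E: (undup C) => //; move: mC; rewrite -mem_undup E.
by rewrite /is_unit eqn_leq => -> ->.
Qed.

Definition coherent (S : seq lit) := forall l, l \in S -> neg l \notin S.

Lemma coherent_rcons S l : coherent S -> l \notin S -> neg l \notin S -> coherent (rcons S l).
Proof.
move=> coh lS nlS k; rewrite !mem_rcons !inE => /orP [/eqP->|kS]; first by rewrite neg_neq.
by rewrite negb_or (coh _ kS) andbT; apply: contraNneq nlS => <-; rewrite negK.
Qed.

Section UnitPropagation.
Variable G : cnf.
Hypothesis G_nil : [::] \notin G.
Notation derived := (up_derived G).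

Definition propagation_closed S := forall m, derived S m -> m \in S.

Lemma mem_nil_restrict_inconsistent S : [::] \in restrict G S -> ~ up_consistent G S.
Proof.
case/mem_restrict=> [[|l C] HC [_ EC]]; first by case/negP: G_nil.
have falsified m : m \in l :: C -> neg m \in S.
  by move=> mC; apply: contraT => nm; have : m \in [::] by rewrite EC mem_filter nm.
move=> consS; apply: (consS l); last exact/upd_init/falsified/mem_head.
by apply: (upd_step HC (mem_head _ _)) => m mC _; apply/upd_init/falsified.
Qed.

Lemma unit_clause_derived S C : C \in restrict G S -> is_unit C ->
  let l := head (0, true) C in [/\ l \in C, l \notin S, neg l \notin S & derived S l].
Proof.
case/mem_restrict=> C0 HC0 [nS ->] unit l.
have : l \in [seq m <- C0 | neg m \notin S].
  by move: unit; rewrite /l; case: [seq m <- C0 | _] => // *; apply: mem_head.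
rewrite mem_filter => /andP [nlS lC0]; split => //.
- by rewrite nlS.
- by apply: contra nS => lS; apply/hasP; exists l.
apply: (upd_step HC0 lC0) => m mC0 ml; apply/upd_init/contraT => nmS.
by case/eqP: ml; apply: is_unitP unit _ _; rewrite mem_filter nmS.
Qed.

Lemma up_fuel_restrict n S : coherent S -> size (restrict G S) <= n ->
  exists S', [/\ coherent S', up_equiv G S' S, ~~ has is_unit (restrict G S')
               & up_fuel n (restrict G S) = restrict G S'].
Proof.
elim: n S => [|n IH] S coh sz.
  by exists S; rewrite leqn0 size_eq0 in sz; rewrite (eqP sz).
rewrite /=; case E: [seq C <- restrict G S | is_unit C] => [|C rest].
  by exists S; split => //; rewrite has_filter E.
have /andP [unit CS] : is_unit C && (C \in restrict G S) by rewrite -mem_filter E mem_head.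
have [lC lS nlS Dl] := unit_clause_derived CS unit.
set l := head (0, true) C in lC lS nlS Dl *.
rewrite restrict_rcons //.
have [|S' [coh' E' nu ->]] := IH (rcons S l) (coherent_rcons coh lS nlS).
  by rewrite -ltnS (leq_trans _ sz) // -restrict_rcons // (size_restrict_lt CS lC).
by exists S'; split => // m; rewrite E' (up_equiv_rcons_derived Dl).
Qed.

Lemma unit_free_closed S : coherent S -> ~~ has is_unit (restrict G S) ->
  [::] \notin restrict G S -> propagation_closed S.
Proof.
move=> coh nu ne m; elim=> // C k HC kC _ IH.
case: (boolP (has (fun l => l \in S) C)) => [/hasP [j jC jS] | nS].
  case: (eqVneq j k) => [<- //|jk].
  by move: (coh _ jS); rewrite (IH j jC jk).
have C'S : [seq l <- C | neg l \notin S] \in restrict G S by apply/mem_restrict; exists C.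
have C'k l : l \in [seq l <- C | neg l \notin S] -> l = k.
  rewrite mem_filter => /andP [nl lC]; apply/eqP; apply: contraNT nl => lk; exact: IH.
case E: [seq l <- C | neg l \notin S] => [|l s] in C'S C'k *; first by rewrite C'S in ne.
have kls : k \in l :: s by rewrite -(C'k l (mem_head _ _)) mem_head.
by case/hasP: nu; exists (l :: s); last exact: is_unit_intro kls C'k.
Qed.

Lemma closed_consistent S : coherent S -> propagation_closed S -> up_consistent G S.
Proof. by move=> coh cl l /cl H1 /cl H2; move: (coh _ H1); rewrite H2. Qed.

Lemma vars_restrict_closed S x : propagation_closed S ->
  x \in vars (restrict G S) <-> active G S x.
Proof.
move=> cl; split.
  case/mem_vars=> C' /mem_restrict [C HC [nS ->]] [m].
  rewrite mem_filter => /andP [nm mC] mx; exists C => //; split.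
    by move=> k kC /cl kS; case/hasP: nS; exists k.
  by exists m => //; split => // /cl; apply/negP.
case=> C HC [unC [m mC [mx nm]]]; apply/mem_vars.
exists [seq l <- C | neg l \notin S].
  apply/mem_restrict; exists C => //; split => //.
  by apply/hasPn => k kC; apply/negP => /(upd_init G); apply: unC.
by exists m => //; rewrite mem_filter mC andbT; apply: contra_notN nm => /(upd_init G).
Qed.

Lemma UP_restrict S : coherent S ->
  exists S', [/\ coherent S', up_equiv G S' S, ~~ has is_unit (restrict G S')
               & UP (restrict G S) = restrict G S'].
Proof. by move=> coh; apply: up_fuel_restrict. Qed.

Lemma mem_nil_UP_restrict S : coherent S ->
  [::] \in UP (restrict G S) <-> ~ up_consistent G S.
Proof.
case/UP_restrict=> S' [coh' E nu ->]; split.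
  by move/mem_nil_restrict_inconsistent => nc c; apply/nc/(up_consistent_equiv _ c) => l; rewrite E.
case: (boolP ([::] \in restrict G S')) => // ne [].
exact/(up_consistent_equiv E)/(closed_consistent coh')/unit_free_closed.
Qed.

Lemma vars_UP_restrict S x : coherent S -> up_consistent G S ->
  x \in vars (UP (restrict G S)) <-> active G S x.
Proof.
move=> coh c; have [S' [coh' E nu EUP]] := UP_restrict coh.
have ne : [::] \notin restrict G S' by apply/negP; rewrite -EUP => /(mem_nil_UP_restrict coh).
rewrite EUP vars_restrict_closed; last exact: unit_free_closed.
by split; apply: active_equiv => // l; rewrite E.
Qed.

End UnitPropagation.

Section SearchTrees.
Variables (G : cnf) (B : seq nat).
Hypothesis G_nil : [::] \notin G.

Lemma dmst_nodeE H x T1 T2 : dmst B H (Node x T1 T2) <->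
  [/\ [::] \notin UP H, x \in B, x \in vars (UP H),
      dmst B (UP (restrict H [:: (x, false)])) T1 & dmst B (UP (restrict H [:: (x, true)])) T2].
Proof. by split=> [D | []]; [inversion D | constructor]. Qed.

Lemma dmst_child S x b T : coherent S -> active G S x ->
  (forall S, coherent S -> dmst B (restrict G S) T <-> dm_tree G B S T) ->
  dmst B (UP (restrict (restrict G S) [:: (x, b)])) T <-> dm_tree G B (rcons S (x, b)) T.
Proof.
move=> coh act IH.
have [nS nnS] : (x, b) \notin S /\ neg (x, b) \notin S by split; apply: active_notin act.
rewrite restrict_rcons //; have [S' [coh' E _ ->]] := UP_restrict G (coherent_rcons coh nS nnS).
by rewrite IH //; split; apply: dm_tree_equiv => // l; rewrite E.
Qed.

Lemma dmst_restrict T S : coherent S -> dmst B (restrict G S) T <-> dm_tree G B S T.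
Proof.
elim: T S => [|x T1 IH1 T2 IH2] S coh.
  split=> [D | /dm_tree_leafP nc]; last exact/dmst_leaf/mem_nil_UP_restrict.
  by apply: dm_tree_leaf; apply/(mem_nil_UP_restrict G_nil coh); inversion D.
rewrite dmst_nodeE; split=> [[ne xB xV D1 D2] | /dm_tree_nodeP [c xB act D1 D2]].
  have c : up_consistent G S by apply: NNPP => nc; case/negP: ne; apply/mem_nil_UP_restrict.
  have act : active G S x by apply/(vars_UP_restrict G_nil _ coh c).
  apply: dm_tree_node => //; first exact/(dmst_child _ coh act IH1).
  exact/(dmst_child _ coh act IH2).
split => //.
- by apply/negP => /(mem_nil_UP_restrict G_nil coh).
- exact/(vars_UP_restrict G_nil _ coh c).
- exact/(dmst_child _ coh act IH1).
exact/(dmst_child _ coh act IH2).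
Qed.

End SearchTrees.

(** * The formula c_X(F) *)

Lemma uniq_cat_notin (T : eqType) (s1 s2 : seq T) x : uniq (s1 ++ s2) -> x \in s1 -> x \notin s2.
Proof. by rewrite cat_uniq => /and3P [_ /hasPn H _] xs1; apply: contraL xs1 => /H. Qed.

Section CX.
Variables (F : cnf) (X Y Z : seq nat) (a b : nat) (vs : seq nat).
Hypothesis uniq_vars : uniq (X ++ Y ++ Z ++ a :: b :: vs).
Hypothesis size_vs : size vs = size X.
Notation G := (cX F X a b vs).
Notation derived := (up_derived G).
Notation XV := (zip X vs).

Let uniq_XYZ : uniq (X ++ Y ++ Z).
Proof. by move: uniq_vars; rewrite !catA cat_uniq -!catA => /andP []. Qed.

Lemma uniq_XY : uniq (X ++ Y).
Proof. by move: uniq_XYZ; rewrite catA cat_uniq => /andP []. Qed.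

Lemma uniq_X : uniq X.
Proof. by move: uniq_XY; rewrite cat_uniq => /andP []. Qed.

Lemma fresh_notin_XY w : w \in a :: b :: vs -> w \notin X ++ Y.
Proof.
move: uniq_vars; rewrite !catA => /uniq_cat_notin nW wW.
by apply: contraL wW => wXY; apply: nW; rewrite mem_cat wXY.
Qed.

Lemma Y_notin_X y : y \in Y -> y \notin X.
Proof.
move=> yY; apply: contraL yY => /(uniq_cat_notin uniq_XYZ).
by rewrite mem_cat negb_or => /andP [].
Qed.

Lemma Z_notin_XY z : z \in Z -> z \notin X ++ Y.
Proof. by move=> zZ; apply: contraL zZ; apply: uniq_cat_notin; rewrite -catA. Qed.

Let uniq_abvs : uniq (a :: b :: vs).
Proof. by move: uniq_vars; rewrite !catA cat_uniq => /and3P []. Qed.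

Lemma a_neq_b : a != b.
Proof. by move: uniq_abvs => /= /andP []; rewrite inE negb_or => /andP []. Qed.

Lemma a_notin_vs : a \notin vs.
Proof. by move: uniq_abvs => /= /andP []; rewrite inE negb_or => /andP []. Qed.

Lemma b_notin_vs : b \notin vs.
Proof. by move: uniq_abvs => /= /and3P []. Qed.

Lemma v_notin_X v : v \in vs -> v \notin X.
Proof.
move=> vvs; have /fresh_notin_XY : v \in a :: b :: vs by rewrite !inE vvs !orbT.
by rewrite mem_cat negb_or => /andP [].
Qed.

Lemma X_notin_vs x : x \in X -> x \notin vs.
Proof. exact/contraL/v_notin_X. Qed.

Lemma zipP p : reflect (exists2 i, i < size X & p = (nth 0 X i, nth 0 vs i)) (p \in XV).
Proof.
apply: (iffP idP) => [pz | [i iX ->]].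
  exists (index p XV); first by rewrite -(minnn (size X)) -{2}size_vs -size_zip index_mem.
  by rewrite -nth_zip // nth_index.
by rewrite -nth_zip // mem_nth // size_zip size_vs minnn.
Qed.

Lemma mem_XV x v : (x, v) \in XV -> x \in X /\ v \in vs.
Proof. by case/zipP=> i iX [-> ->]; split; apply: mem_nth; rewrite ?size_vs. Qed.

Lemma XV_of_X x : x \in X -> exists v, (x, v) \in XV.
Proof.
move=> xX; exists (nth 0 vs (index x X)); apply/zipP.
by exists (index x X); rewrite ?index_mem ?nth_index.
Qed.

Lemma XV_of_vs v : v \in vs -> exists x, (x, v) \in XV.
Proof.
move=> vvs; exists (nth 0 X (index v vs)); apply/zipP; exists (index v vs).
  by rewrite -size_vs index_mem.
by rewrite nth_index.
Qed.

Lemma XV_inj x x' v : (x, v) \in XV -> (x', v) \in XV -> x = x'.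
Proof.
case/zipP=> i iX [-> Ei] /zipP [j jX [-> Ej]].
have uvs : uniq vs by move: uniq_abvs => /= /and3P [].
have : nth 0 vs i == nth 0 vs j by rewrite -Ei -Ej.
by rewrite nth_uniq ?size_vs // => /eqP ->.
Qed.

Lemma cX_cases C : C \in G ->
  [\/ exists2 g, g \in F & C = g ++ [:: (a, false); (b, false)],
      exists c, exists2 p, p \in XV & C = [:: (p.1, c); (p.2, true)]
    | exists2 c, c \in [:: a; b] & C = rcons [seq (v, false) | v <- vs] (c, true)].
Proof.
rewrite /cX !mem_cat !inE.
case/or4P=> [/mapP [g gF ->] | /mapP [p pz ->] | /mapP [p pz ->] | /orP [/eqP-> | /eqP->]].
- by apply: Or31; exists g.
- by apply: Or32; exists false, p.
- by apply: Or32; exists true, p.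
- by apply: Or33; exists a; rewrite ?mem_head.
by apply: Or33; exists b; rewrite ?inE ?eqxx ?orbT.
Qed.

Lemma cX_F_clause g : g \in F -> g ++ [:: (a, false); (b, false)] \in G.
Proof. by move=> gF; rewrite /cX mem_cat (map_f (fun C => C ++ _) gF). Qed.

Lemma cX_XV_clause c p : p \in XV -> [:: (p.1, c); (p.2, true)] \in G.
Proof.
move=> pz; rewrite /cX !mem_cat.
by case: c; rewrite (map_f (fun p => [:: (p.1, _); (p.2, true)]) pz) ?orbT.
Qed.

Lemma cX_vs_clause c : c \in [:: a; b] -> rcons [seq (v, false) | v <- vs] (c, true) \in G.
Proof. by rewrite /cX !mem_cat !inE => /orP [/eqP-> | /eqP->]; rewrite eqxx !orbT. Qed.

Lemma cX_nil : [::] \notin G.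
Proof.
apply/negP => /cX_cases [[g _] | [c [p _]] | [c _]] //; first by case: g.
by case: vs.
Qed.

Definition decided (S : seq lit) x := ((x, true) \in S) || ((x, false) \in S).

Definition wf_decisions (S : seq lit) := (forall l, l \in S -> l.1 \in X ++ Y) /\ coherent S.

Definition undecided (S : seq lit) (s : seq nat) := [seq x <- s | ~~ decided S x].

Lemma decided_rcons S x c y : decided (rcons S (x, c)) y = (y == x) || decided S y.
Proof.
rewrite /decided !mem_rcons !inE !xpair_eqE.
by case: (y == x); case: c; rewrite /= ?orbT ?orbF.
Qed.

Lemma undecided_rcons S s x c : uniq s -> undecided (rcons S (x, c)) s = rem x (undecided S s).
Proof.
move=> us; rewrite rem_filter ?filter_uniq // /undecided -filter_predI.
by apply: eq_filter => y /=; rewrite decided_rcons negb_or.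
Qed.

Lemma undecided_X_rcons S x c : undecided (rcons S (x, c)) X = rem x (undecided S X).
Proof. exact/undecided_rcons/uniq_X. Qed.

Lemma undecided_rcons_notin S s x c : x \notin s -> undecided (rcons S (x, c)) s = undecided S s.
Proof.
move=> xs; rewrite /undecided; apply: eq_in_filter => y ys.
by rewrite decided_rcons; case: eqP => // Eyx; rewrite -Eyx ys in xs.
Qed.

Lemma undecided_mem S S' s : S =i S' -> undecided S s = undecided S' s.
Proof. by move=> E; apply: eq_filter => x; rewrite /decided !E. Qed.

Lemma undecided_nil s : undecided [::] s = s.
Proof. exact/all_filterP/allP. Qed.

Lemma mem_undecided S x : x \in undecided S X -> x \in X /\ ~~ decided S x.
Proof. by rewrite mem_filter andbC => /andP []. Qed.

Lemma wf_rcons S x c : wf_decisions S -> x \in X ++ Y -> ~~ decided S x ->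
  wf_decisions (rcons S (x, c)).
Proof.
move=> [varS cohS] xXY; rewrite /decided negb_or => /andP [nT nF]; split.
  by move=> l; rewrite mem_rcons inE => /orP [/eqP-> | /varS].
by apply: coherent_rcons cohS _ _; case: c; rewrite /neg.
Qed.

Lemma active_not_decided S x : active G S x -> ~~ decided S x.
Proof. by move=> act; rewrite /decided negb_or !(active_notin _ act). Qed.

(* What unit propagation derives from S in c_X(F) while some x_i is still
   undecided: the clauses x_i \/ v_i and ~x_i \/ v_i fire for decided x_i
   only, and the two long clauses (hence a, b) never fire. *)
Definition early_closure (S : seq lit) : seq lit :=
  S ++ [seq (p.2, true) | p <- XV & decided S p.1].

Definition early_closed S (C : clause) := forall m, m \in C ->
  (forall l, l \in C -> l != m -> neg l \in early_closure S) -> m \in early_closure S.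

Section EarlyClosure.
Variable S : seq lit.
Hypothesis wfS : wf_decisions S.

Lemma early_closure_fresh w c : w \in a :: b :: vs -> (w, c) \in early_closure S -> w \in vs /\ c.
Proof.
move=> wW; rewrite mem_cat => /orP [/wfS.1 /= wXY | /mapP [[x v]]].
  by move: (fresh_notin_XY wW); rewrite wXY.
by rewrite mem_filter => /andP [_ /mem_XV [_ vvs]] [-> ->].
Qed.

Lemma early_closure_notin_vs w c : w \notin vs -> (w, c) \in early_closure S -> (w, c) \in S.
Proof.
move=> wvs; rewrite mem_cat => /orP [//|/mapP [[x v]]].
by rewrite mem_filter => /andP [_ /mem_XV [_ vvs]] [Ew _]; rewrite Ew vvs in wvs.
Qed.

Lemma early_closure_XV x v : (x, v) \in XV -> (v, true) \in early_closure S -> decided S x.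
Proof.
move=> xv; have [_ vvs] := mem_XV xv; rewrite mem_cat => /orP [/wfS.1 /= vXY | /mapP [[x' v']]].
  have fresh_v : v \in a :: b :: vs by rewrite !inE vvs !orbT.
  by case/negP: (fresh_notin_XY fresh_v).
rewrite mem_filter /= => /andP [dx' x'v'] [Ev].
by rewrite -Ev in x'v'; rewrite (XV_inj xv x'v').
Qed.

Lemma early_closure_decided x v : (x, v) \in XV -> decided S x -> (v, true) \in early_closure S.
Proof.
move=> xv dx; rewrite mem_cat; apply/orP; right.
by apply/mapP; exists (x, v); rewrite ?mem_filter ?dx.
Qed.

Lemma early_closed_F_clause g : g \in F -> early_closed S (g ++ [:: (a, false); (b, false)]).
Proof.
move=> gF m mC others; set C := g ++ _ in mC others.
have [aC bC] : (a, false) \in C /\ (b, false) \in C by rewrite !mem_cat !inE !eqxx !orbT.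
have fresh_a : a \in a :: b :: vs by rewrite mem_head.
have fresh_b : b \in a :: b :: vs by rewrite !inE eqxx orbT.
case: (eqVneq m (a, false)) => [Em | ma].
  have bm : (b, false) != m by rewrite Em xpair_eqE eq_sym (negbTE a_neq_b).
  by case: (early_closure_fresh fresh_b (others _ bC bm)); rewrite (negbTE b_notin_vs).
by case: (early_closure_fresh fresh_a (others _ aC _)); rewrite 1?eq_sym // (negbTE a_notin_vs).
Qed.

Lemma early_closed_XV_clause c p : p \in XV -> early_closed S [:: (p.1, c); (p.2, true)].
Proof.
case: p => x v xv m /=; have [xX vvs] := mem_XV xv.
have x_neq_v : x != v by apply: contraTneq xX => ->; apply: v_notin_X.
have fresh_v : v \in a :: b :: vs by rewrite !inE vvs !orbT.
rewrite !inE => /orP [] /eqP -> others.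
  have vC : (v, true) \in [:: (x, c); (v, true)] by rewrite !inE eqxx orbT.
  have vx : (v, true) != (x, c) by rewrite xpair_eqE eq_sym (negbTE x_neq_v).
  by case: (early_closure_fresh fresh_v (others _ vC vx)).
apply: (early_closure_decided xv).
have /others : (x, c) \in [:: (x, c); (v, true)] by rewrite mem_head.
rewrite xpair_eqE (negbTE x_neq_v) => /(_ isT) /(early_closure_notin_vs (X_notin_vs xX)) xcS.
by rewrite /decided; case: c {others} xcS => ->; rewrite ?orbT.
Qed.

Lemma early_closed_vs_clause c x0 : c \in [:: a; b] -> x0 \in X -> ~~ decided S x0 ->
  early_closed S (rcons [seq (v, false) | v <- vs] (c, true)).
Proof.
move=> cab x0X nd0 m.
have fresh_c : c \in a :: b :: vs by move: cab; rewrite !inE => /orP [] ->; rewrite ?orbT.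
rewrite mem_rcons inE => /orP [/eqP-> | /mapP [v vvs ->]] others.
  have [v0 x0v0] := XV_of_X x0X; have [_ v0vs] := mem_XV x0v0.
  have /others : (v0, false) \in rcons [seq (v, false) | v <- vs] (c, true).
    by rewrite mem_rcons inE map_f ?orbT.
  by rewrite xpair_eqE andbF => /(_ isT) /(early_closure_XV x0v0); rewrite (negbTE nd0).
have cC : (c, true) \in rcons [seq (v, false) | v <- vs] (c, true) by rewrite mem_rcons mem_head.
by case: (early_closure_fresh fresh_c (others _ cC _)); rewrite // xpair_eqE andbF.
Qed.

Lemma derived_early_closure x0 m : x0 \in X -> ~~ decided S x0 ->
  derived S m -> m \in early_closure S.
Proof.
move=> x0X nd0; elim=> [k kS | C k HC kC _ IH]; first by rewrite mem_cat kS.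
case/cX_cases: HC kC IH => [[g gF ->] | [c [p pXV ->]] | [c cab ->]].
- exact: early_closed_F_clause.
- exact: early_closed_XV_clause.
exact: (early_closed_vs_clause cab x0X nd0).
Qed.

Lemma consistent_undecided x0 : x0 \in X -> ~~ decided S x0 -> up_consistent G S.
Proof.
move=> x0X nd0 [w c] /(derived_early_closure x0X nd0) Dl /(derived_early_closure x0X nd0) Dnl.
have fresh_w : w \in vs -> w \in a :: b :: vs by move=> wvs; rewrite !inE wvs !orbT.
case: (boolP (w \in vs)) => [/fresh_w wW | wvs].
  by have [_] := early_closure_fresh wW Dl; have [_] := early_closure_fresh wW Dnl => /negP.
have := wfS.2 _ (early_closure_notin_vs wvs Dl).
by rewrite (early_closure_notin_vs wvs Dnl).
Qed.

Lemma underived_undecided x c : x \in X -> ~~ decided S x -> ~ derived S (x, c).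
Proof.
move=> xX ndx /(derived_early_closure xX ndx) /(early_closure_notin_vs (X_notin_vs xX)) xcS.
by move: ndx; rewrite /decided; case: c xcS => ->; rewrite ?orbT.
Qed.

Lemma active_undecided x : x \in X -> ~~ decided S x -> active G S x.
Proof.
move=> xX ndx; have [v xv] := XV_of_X xX.
exists [:: (x, false); (v, true)]; first exact: (cX_XV_clause false xv).
split; last by exists (x, false); rewrite ?mem_head //; split=> //; apply: underived_undecided.
move=> m; rewrite !inE => /orP [] /eqP -> ; first exact: underived_undecided.
by move/(derived_early_closure xX ndx)/(early_closure_XV xv); apply/negP.
Qed.

End EarlyClosure.

(** * Search trees of the required shape *)

Notation DM := (dm_tree G (X ++ Y)).

Lemma dm_tree_node_undecided S x T0 T1 : wf_decisions S -> x \in undecided S X ->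
  DM (rcons S (x, false)) T0 -> DM (rcons S (x, true)) T1 -> DM S (Node x T0 T1).
Proof.
move=> wfS /mem_undecided [xX ndx]; apply: dm_tree_node; rewrite ?mem_cat ?xX //.
  exact: (consistent_undecided wfS xX ndx).
exact: (active_undecided wfS xX ndx).
Qed.

Lemma xy_shape_nodeE s x T0 T1 : s != [::] ->
  xy_shape s Y (Node x T0 T1) = [&& x \in s, xy_shape (rem x s) Y T0 & xy_shape (rem x s) Y T1].
Proof. by case: s => // h t _ /=; rewrite andbA. Qed.

Lemma xy_shape_nil T : xy_shape [::] Y T = labels_in Y T.
Proof. by case: T. Qed.

Lemma xy_shape_leaf s : s != [::] -> xy_shape s Y Leaf = false.
Proof. by case: s. Qed.

Definition xy_dm_tree S T := DM S T /\ xy_shape (undecided S X) Y T.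

Lemma xy_dm_tree_mem S S' T : S =i S' -> xy_dm_tree S T -> xy_dm_tree S' T.
Proof. by move=> E [D sh]; split; [apply: dm_tree_mem D | rewrite -(undecided_mem _ E)]. Qed.

Lemma xy_dm_tree_node S x T0 T1 : wf_decisions S -> x \in undecided S X ->
  xy_dm_tree (rcons S (x, false)) T0 -> xy_dm_tree (rcons S (x, true)) T1 ->
  xy_dm_tree S (Node x T0 T1).
Proof.
move=> wfS xU [D0 sh0] [D1 sh1]; split; first exact: dm_tree_node_undecided.
rewrite xy_shape_nodeE; last by apply: contraTneq xU => ->.
by rewrite !undecided_X_rcons in sh0 sh1; rewrite xU sh0 sh1.
Qed.

Lemma xy_dm_tree_nodeP S x T0 T1 : undecided S X != [::] -> xy_dm_tree S (Node x T0 T1) ->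
  [/\ x \in undecided S X, xy_dm_tree (rcons S (x, false)) T0 & xy_dm_tree (rcons S (x, true)) T1].
Proof.
move=> Une [/dm_tree_nodeP [_ _ _ D0 D1]]; rewrite xy_shape_nodeE // => /and3P [xU sh0 sh1].
by split; rewrite // /xy_dm_tree undecided_X_rcons.
Qed.

Lemma xy_dm_tree_reroot T S x : wf_decisions S -> x \in undecided S X -> xy_dm_tree S T ->
  exists E : bool -> tree, (forall c, xy_dm_tree (rcons S (x, c)) (E c)) /\
    tree_size (E false) + tree_size (E true) < tree_size T.
Proof.
elim: T S => [|x' T0 IH0 T1 IH1] S wfS xU [D sh].
  by move: sh; rewrite xy_shape_leaf //; apply: contraTneq xU => ->.
have Une : undecided S X != [::] by apply: contraTneq xU => ->.
have [x'U HT0 HT1] := xy_dm_tree_nodeP Une (conj D sh).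
case: (eqVneq x' x) => [<- | x'x].
  by exists (fun c => if c then T1 else T0); split => [[]|] //=; rewrite addnS.
have [x'X ndx'] := mem_undecided x'U.
have wf' c : wf_decisions (rcons S (x', c)) by apply: wf_rcons; rewrite ?mem_cat ?x'X.
have xU' c : x \in undecided (rcons S (x', c)) X.
  by rewrite undecided_X_rcons (mem_rem_uniq _ (filter_uniq _ uniq_X)) inE eq_sym x'x.
have [E0 [HE0 sz0]] := IH0 _ (wf' false) (xU' false) HT0.
have [E1 [HE1 sz1]] := IH1 _ (wf' true) (xU' true) HT1.
exists (fun d => Node x' (E0 d) (E1 d)); split => [d|]; last by rewrite /=; lia.
have [xX ndx] := mem_undecided xU.
apply: xy_dm_tree_node.
- by apply: wf_rcons; rewrite ?mem_cat ?xX.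
- by rewrite undecided_X_rcons (mem_rem_uniq _ (filter_uniq _ uniq_X)) inE x'x.
- by apply: xy_dm_tree_mem (HE0 d); apply: mem_rcons_swap.
by apply: xy_dm_tree_mem (HE1 d); apply: mem_rcons_swap.
Qed.

Lemma xy_dm_tree_merge_decided S y A B0 : undecided S X = [::] -> y \in Y ->
  xy_dm_tree (rcons S (y, false)) A -> xy_dm_tree (rcons S (y, true)) B0 ->
  exists C, xy_dm_tree S C /\ tree_size C <= (tree_size A + tree_size B0).+1.
Proof.
move=> U0 yY [DA shA] [DB shB]; have yXY : y \in X ++ Y by rewrite mem_cat yY orbT.
rewrite !undecided_rcons_notin ?Y_notin_X // U0 in shA shB.
rewrite /xy_dm_tree U0; case: (dm_tree_merge yXY DA DB) => D.
- by exists Leaf.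
- by exists A; do !split => //; lia.
- by exists B0; do !split => //; lia.
by exists (Node y A B0); do !split; rewrite // xy_shape_nil /= yY -!xy_shape_nil shA shB.
Qed.

Lemma xy_dm_tree_merge A S B0 y : wf_decisions S -> y \in Y -> ~~ decided S y ->
  xy_dm_tree (rcons S (y, false)) A -> xy_dm_tree (rcons S (y, true)) B0 ->
  exists C, xy_dm_tree S C /\ tree_size C <= (tree_size A + tree_size B0).+1.
Proof.
elim: A S B0 => [|x A0 IH0 A1 IH1] S B0 wfS yY ndy HA HB;
  (case: (eqVneq (undecided S X) [::]) => [U0 | Une]; first exact: xy_dm_tree_merge_decided HA HB).
  by case: HA => _; rewrite undecided_rcons_notin ?Y_notin_X // xy_shape_leaf.
have yX := Y_notin_X yY; have yXY : y \in X ++ Y by rewrite mem_cat yY orbT.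
have Uy c : undecided (rcons S (y, c)) X = undecided S X by apply: undecided_rcons_notin.
have Une' : undecided (rcons S (y, false)) X != [::] by rewrite Uy.
have [xU HA0 HA1] := xy_dm_tree_nodeP Une' HA; rewrite Uy in xU.
have [xX ndx] := mem_undecided xU.
have [E [HE szE]] : exists E : bool -> tree,
    (forall c, xy_dm_tree (rcons (rcons S (y, true)) (x, c)) (E c)) /\
    tree_size (E false) + tree_size (E true) < tree_size B0.
  by apply: xy_dm_tree_reroot HB; rewrite ?Uy //; apply: wf_rcons.
have wfx c : wf_decisions (rcons S (x, c)) by apply: wf_rcons; rewrite ?mem_cat ?xX.
have ndyx c : ~~ decided (rcons S (x, c)) y.
  by rewrite decided_rcons negb_or ndy andbT; apply: contraNneq yX => ->.
have swap c d T : xy_dm_tree (rcons (rcons S (y, d)) (x, c)) T ->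
    xy_dm_tree (rcons (rcons S (x, c)) (y, d)) T.
  exact/xy_dm_tree_mem/mem_rcons_swap.
have [P0 [HP0 sz0]] :=
  IH0 _ (E false) (wfx false) yY (ndyx false) (swap _ _ _ HA0) (swap _ _ _ (HE false)).
have [P1 [HP1 sz1]] :=
  IH1 _ (E true) (wfx true) yY (ndyx true) (swap _ _ _ HA1) (swap _ _ _ (HE true)).
by exists (Node x P0 P1); split; [apply: xy_dm_tree_node | rewrite /=; lia].
Qed.

Lemma xy_dm_tree_normalize T S : wf_decisions S -> DM S T ->
  exists T', xy_dm_tree S T' /\ tree_size T' <= tree_size T.
Proof.
elim: T S => [|z T0 IH0 T1 IH1] S wfS D.
  case E: (undecided S X) => [|x s]; first by exists Leaf; rewrite /xy_dm_tree E.
  have /mem_undecided [xX ndx] : x \in undecided S X by rewrite E mem_head.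
  by case: (dm_tree_leafP D); apply: (consistent_undecided wfS xX ndx).
case/dm_tree_nodeP: D => _ zXY act D0 D1; have ndz := active_not_decided act.
have [T0' [HT0 sz0]] := IH0 _ (wf_rcons false wfS zXY ndz) D0.
have [T1' [HT1 sz1]] := IH1 _ (wf_rcons true wfS zXY ndz) D1.
case: (boolP (z \in X)) => zX.
  exists (Node z T0' T1'); split; last by rewrite /=; lia.
  by apply: xy_dm_tree_node; rewrite // mem_filter ndz.
have zY : z \in Y by move: zXY; rewrite mem_cat (negbTE zX).
have [C [HC szC]] := xy_dm_tree_merge wfS zY ndz HT0 HT1.
by exists C; split => //=; lia.
Qed.

(** * Existence of search trees *)

Section Existence.
Hypothesis vars_F : all (fun v => v \in X ++ Y ++ Z) (vars F).
Hypothesis unsat_F : unsat F.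
Hypothesis Z_determined : forall alpha : nat -> bool,
  let I := [seq (v, alpha v) | v <- X ++ Y] in
  forall z, z \in Z -> exists p : bool, up_derived (restrict F I) I (z, p).

Section Saturated.
Variable S : seq lit.
Hypothesis consS : up_consistent G S.
Hypothesis decided_X : forall x, x \in X -> decided S x.
Hypothesis inactive_XY : forall z, z \in X ++ Y -> ~ active G S z.

Lemma derived_vs v : v \in vs -> derived S (v, true).
Proof.
move=> vvs; have [x xv] := XV_of_vs vvs; have [xX _] := mem_XV xv.
have [c xcS] : exists c, (x, c) \in S.
  by move: (decided_X xX); rewrite /decided => /orP [] xS; eexists; exact: xS.
apply: (upd_step (cX_XV_clause (~~ c) xv)); first by rewrite !inE eqxx orbT.
move=> l; rewrite !inE => /orP [] /eqP -> /=; last by rewrite eqxx.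
by move=> _; apply: upd_init; rewrite /neg /= negbK.
Qed.

Lemma derived_ab c : c \in [:: a; b] -> derived S (c, true).
Proof.
move=> cab; apply: (upd_step (cX_vs_clause cab)); first by rewrite mem_rcons mem_head.
move=> l; rewrite mem_rcons inE => /orP [/eqP-> | /mapP [v vvs ->] _]; first by rewrite eqxx.
exact: derived_vs.
Qed.

Lemma derived_neg_F_clause g k : g \in F -> unsatisfied G S g -> k \in g -> k.1 \in X ++ Y ->
  derived S (neg k).
Proof.
move=> gF ung kg kXY; apply: NNPP => nDk; apply: (inactive_XY kXY).
exists (g ++ [:: (a, false); (b, false)]); first exact: cX_F_clause.
split; last by exists k; rewrite ?mem_cat ?kg.
move=> m; rewrite mem_cat !inE => /orP [/ung // | /orP [] /eqP -> D].
  by apply: (consS (derived_ab (mem_head _ _))).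
by apply: (consS (derived_ab (_ : b \in [:: a; b]))); rewrite ?inE ?eqxx ?orbT.
Qed.

Let alpha v : bool := if excluded_middle_informative (derived S (v, true)) then true else false.

Lemma alpha_derived v c : derived S (v, c) -> alpha v = c.
Proof.
rewrite /alpha; case: excluded_middle_informative => [DT | nDT]; case: c => // DF.
by case: (consS DT DF).
Qed.

Let I := [seq (v, alpha v) | v <- X ++ Y].

Lemma mem_I l : (l \in I) = (l.1 \in X ++ Y) && (alpha l.1 == l.2).
Proof.
case: l => v c; apply/mapP/andP => [[w wXY [-> ->]] // | [/= vXY /eqP <-]].
by exists v.
Qed.

Lemma up_restrict_derived m : up_derived (restrict F I) I m -> m \in I \/ derived S m.
Proof.
elim=> {m} [k kI | C m HC mC _ IH]; [by left | right].
case/mem_restrict: HC => g gF [nI EC]; rewrite {C}EC in mC IH.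
have [nmI mg] : neg m \notin I /\ m \in g by move: mC; rewrite mem_filter => /andP [].
have IH' l : l \in g -> l.1 \notin X ++ Y -> l != m -> derived S (neg l).
  move=> lg lXY lm; have lC : l \in [seq l <- g | neg l \notin I].
    by rewrite mem_filter lg mem_I /= (negbTE lXY).
  by case: (IH l lC lm) => //; rewrite mem_I /= (negbTE lXY).
case: (classic (exists2 j, j \in g & derived S j)) => [[[v c] jg Dj] | ung].
  case: (boolP (v \in X ++ Y)) => vXY.
    by move/hasPn: nI => /(_ _ jg); rewrite mem_I /= vXY (alpha_derived Dj) eqxx.
  case: (eqVneq (v, c) m) => [<- // | jm].
  by case: (consS Dj (IH' _ jg vXY jm)).
apply: (upd_step (cX_F_clause gF)); first by rewrite mem_cat mg.
move=> l; rewrite mem_cat !inE => /orP [lg | /orP [] /eqP ->] lm.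
- case: (boolP (l.1 \in X ++ Y)) => lXY; last exact: IH'.
  by apply: (derived_neg_F_clause gF _ lg lXY) => j jg Dj; apply: ung; exists j.
- exact: derived_ab (mem_head _ _).
by apply: derived_ab; rewrite !inE eqxx orbT.
Qed.

Lemma Z_derived z : z \in Z -> exists c, derived S (z, c).
Proof.
move=> zZ; have [p /up_restrict_derived [] Dp] := Z_determined alpha zZ; last by exists p.
by move: Dp; rewrite mem_I (negbTE (Z_notin_XY zZ)).
Qed.

Lemma saturated_absurd : False.
Proof.
have /allPn [g gF nsat] := unsat_F alpha.
have ung : unsatisfied G S g.
  by move=> [v c] kg /alpha_derived Ev; move/hasPn: nsat => /(_ _ kg); rewrite /= Ev eqxx.
have Dneg k : k \in g -> derived S (neg k).
  move=> kg; have : k.1 \in X ++ Y ++ Z.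
    by apply: (allP vars_F); apply/mem_vars; exists g => //; exists k.
  rewrite catA mem_cat => /orP [kXY | kZ]; first exact: (derived_neg_F_clause gF ung kg kXY).
  have [c Dc] := Z_derived kZ; case: k kg {kZ} Dc => v c' kg Dc.
  case: (eqVneq c c') => [Ec | cc']; first by rewrite Ec in Dc; case: (ung _ kg Dc).
  by rewrite /neg /=; move: Dc; have -> : c = ~~ c' by move: cc'; case: c; case: (c').
apply: (consS (derived_ab (mem_head _ _))).
apply: (upd_step (cX_F_clause gF)); first by rewrite mem_cat !inE eqxx orbT.
move=> l; rewrite mem_cat !inE => /orP [/Dneg // | /orP [] /eqP ->]; first by rewrite eqxx.
by move=> _; apply: derived_ab; rewrite !inE eqxx orbT.
Qed.

End Saturated.

Lemma active_XY_exists S : wf_decisions S -> up_consistent G S ->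
  exists2 z, z \in X ++ Y & active G S z.
Proof.
move=> wfS consS; case: (boolP (all (decided S) X)) => [/allP decX | /allPn [x xX ndx]].
  apply: NNPP => none; apply: (saturated_absurd consS decX) => z zXY act.
  by apply: none; exists z.
by exists x; rewrite ?mem_cat ?xX //; apply: active_undecided.
Qed.

Lemma dm_tree_exists S : wf_decisions S -> exists T, DM S T.
Proof.
have [n] := ubnP (size (undecided S (X ++ Y))); elim: n S => // n IH S lt wfS.
case: (classic (up_consistent G S)) => consS; last by exists Leaf; apply: dm_tree_leaf.
have [z zXY act] := active_XY_exists wfS consS; have ndz := active_not_decided act.
have zU : z \in undecided S (X ++ Y) by rewrite mem_filter ndz.
have lt' c : size (undecided (rcons S (z, c)) (X ++ Y)) < n.
  rewrite undecided_rcons ?uniq_XY // size_rem //.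
  by move: lt; case: (undecided S (X ++ Y)) zU.
have [T0 D0] := IH _ (lt' false) (wf_rcons false wfS zXY ndz).
have [T1 D1] := IH _ (lt' true) (wf_rcons true wfS zXY ndz).
by exists (Node z T0 T1); apply: dm_tree_node.
Qed.

End Existence.

End CX.

Theorem theorem5 (F : cnf) (X Y Z : seq nat) (a b : nat) (vs : seq nat) :
  uniq (X ++ Y ++ Z ++ a :: b :: vs) ->
  size vs = size X ->
  all (fun v => v \in X ++ Y ++ Z) (vars F) ->
  unsat F ->
  (forall alpha : nat -> bool,
     let I := [seq (v, alpha v) | v <- X ++ Y] in
     forall z, z \in Z -> exists p : bool, up_derived (restrict F I) I (z, p)) ->
  exists T : tree,
    [/\ dmst (X ++ Y) (cX F X a b vs) T,
        (forall T', dmst (X ++ Y) (cX F X a b vs) T' -> tree_size T <= tree_size T')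
      & xy_shape X Y T].
Proof.
move=> uniq_vars size_vs vars_F unsat_F Z_determined.
have dmstE T : dmst (X ++ Y) (cX F X a b vs) T <-> dm_tree (cX F X a b vs) (X ++ Y) [::] T.
  by rewrite -{1}(restrict_nil (cX F X a b vs)) dmst_restrict // cX_nil.
have wf0 : wf_decisions X Y [::] by [].
have [T DT Tmin] := ex_min_size (dm_tree_exists uniq_vars size_vs vars_F unsat_F Z_determined wf0).
have [T' [[DT' shT'] szT']] := xy_dm_tree_normalize uniq_vars size_vs wf0 DT.
exists T'; split.
- exact/dmstE.
- by move=> T'' /dmstE /Tmin; apply: leq_trans.
by rewrite undecided_nil in shT'.
Qed.
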